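(* Suppose that $k\geq2$ is an integer, that $q_1,\ldots,q_k$ are positive integers, and that for each $1\leq i\leq k$, $C_i$ and $D_i$ are integers satisfying $D_i-C_i\geq\max_{1\leq j\leq k}q_j$. Let $r=\gcd(q_1,\ldots,q_k)$, \[\mathcal{A}=\Big\{\sum_{i=1}^k a_iq_i \;:\; a_i\in\mathbb{Z},\ C_i\leq a_i\leq D_i\Big\},\qquad C=\sum_{i=1}^kC_iq_i,\qquad D=\sum_{i=1}^kD_iq_i .\] Then \[\mathcal{A}\subset\Big\{mr \;:\; m\in\mathbb{Z},\ \frac{C}{r}\leq m\leq\frac{D}{r}\Big\}\] and \[\Big\{mr \;:\; m\in\mathbb{Z},\ \frac{C}{r}+\frac1{r^2}\sum_{i=1}^{k-1}q_iq_{i+1}\leq m\leq\frac{D}{r}-\frac1{r^2}\sum_{i=1}^{k-1}q_iq_{i+1}\Big\}\subset\mathcal{A}.\] *)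

From Stdlib Require Import ZArith QArith List.
Open Scope Z_scope.

Definition zsum (k : nat) (f : nat -> Z) : Z :=
  fold_right Z.add 0 (map f (seq 1 k)).

Definition zgcd_list (k : nat) (q : nat -> Z) : Z :=
  fold_right Z.gcd 0 (map q (seq 1 k)).

Definition setA (k : nat) (q C D : nat -> Z) (n : Z) : Prop :=
  exists a : nat -> Z,
    (forall i, (1 <= i <= k)%nat -> C i <= a i <= D i) /\
    n = zsum k (fun i => a i * q i).

From Stdlib Require Import ZArith QArith List Lia.
Open Scope Z_scope.

(* Writing a_i = C_i + b_i reduces everything to sums of b_i q_i with 0 <= b_i <= L_i := D_i - C_i.  The second is proved by adjoining the q_i one at a
   time: if every multiple of g = gcd(q_1..q_n) in a window [al, be] is such a sum, let
   g' = gcd(g, q_{n+1}) and d = g / g'.  The coefficient b_{n+1} of a multiple x of g' is forced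
   modulo d, and choosing it among d consecutive values shows that every multiple of g' in
   [al + (d - 1) q_{n+1}, be + (L_{n+1} - d + 1) q_{n+1}] is a sum.  Since d g' = g <= q_n, the
   total loss times g' is at most sum q_i q_{i+1}, and since L_i >= max_j q_j the window keeps
   length at least g' max_j q_j, which is what the next step needs. *)

Lemma fold_right_Zadd_init (l : list Z) (a : Z) :
  fold_right Z.add a l = fold_right Z.add 0 l + a.
Proof. induction l as [|x l IH]; simpl; lia. Qed.

Lemma fold_right_Zgcd_init (l : list Z) (a : Z) :
  0 <= a -> fold_right Z.gcd a l = Z.gcd (fold_right Z.gcd 0 l) a.
Proof.
  intros Ha. induction l as [|x l IH]; cbn [fold_right].
  - rewrite Z.gcd_0_l. lia.
  - rewrite IH, Z.gcd_assoc. reflexivity.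
Qed.

Lemma zsum_S (k : nat) (f : nat -> Z) : zsum (S k) f = zsum k f + f (S k).
Proof.
  unfold zsum. rewrite seq_S, map_app, fold_right_app; simpl.
  rewrite fold_right_Zadd_init. replace (1 + k)%nat with (S k) by lia. lia.
Qed.

Lemma zsum_ext (k : nat) (f g : nat -> Z) :
  (forall i, (1 <= i <= k)%nat -> f i = g i) -> zsum k f = zsum k g.
Proof.
  induction k as [|k IH]; intros Hfg; [reflexivity|].
  rewrite !zsum_S, IH, Hfg; [reflexivity | lia | intros; apply Hfg; lia].
Qed.

Lemma zsum_le (k : nat) (f g : nat -> Z) :
  (forall i, (1 <= i <= k)%nat -> f i <= g i) -> zsum k f <= zsum k g.
Proof.
  induction k as [|k IH]; intros Hfg; [apply Z.le_refl|].
  rewrite !zsum_S. apply Z.add_le_mono; [apply IH; intros |]; apply Hfg; lia.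
Qed.

Lemma zsum_add (k : nat) (f g : nat -> Z) :
  zsum k (fun i => f i + g i) = zsum k f + zsum k g.
Proof. induction k as [|k IH]; [reflexivity|]. rewrite !zsum_S, IH. ring. Qed.

Lemma zsum_sub (k : nat) (f g : nat -> Z) :
  zsum k (fun i => f i - g i) = zsum k f - zsum k g.
Proof. induction k as [|k IH]; [reflexivity|]. rewrite !zsum_S, IH. ring. Qed.

Lemma zsum_divide (k : nat) (f : nat -> Z) (r : Z) :
  (forall i, (1 <= i <= k)%nat -> (r | f i)) -> (r | zsum k f).
Proof.
  induction k as [|k IH]; intros Hr; [apply Z.divide_0_r|].
  rewrite zsum_S. apply Z.divide_add_r; [apply IH; intros |]; apply Hr; lia.
Qed.

Lemma zgcd_list_S (k : nat) (q : nat -> Z) :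
  zgcd_list (S k) q = Z.gcd (zgcd_list k q) (q (S k)).
Proof.
  unfold zgcd_list. rewrite seq_S, map_app, fold_right_app; simpl.
  rewrite Z.gcd_0_r, fold_right_Zgcd_init, Z.gcd_abs_r by apply Z.abs_nonneg.
  replace (1 + k)%nat with (S k) by lia. reflexivity.
Qed.

Lemma zgcd_list_1 (q : nat -> Z) : 0 <= q 1%nat -> zgcd_list 1 q = q 1%nat.
Proof. intros Hq. unfold zgcd_list; simpl. rewrite Z.gcd_0_r. lia. Qed.

Lemma zgcd_list_divide (k : nat) (q : nat -> Z) (i : nat) :
  (1 <= i <= k)%nat -> (zgcd_list k q | q i).
Proof.
  induction k as [|k IH]; intros Hi; [lia|]. rewrite zgcd_list_S.
  destruct (Nat.eq_dec i (S k)) as [->|Hne]; [apply Z.gcd_divide_r|].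
  eapply Z.divide_trans; [apply Z.gcd_divide_l | apply IH; lia].
Qed.

Lemma zgcd_list_pos (k : nat) (q : nat -> Z) :
  (1 <= k)%nat -> 0 < q 1%nat -> 0 < zgcd_list k q.
Proof.
  intros Hk Hq. destruct (zgcd_list_divide k q 1 ltac:(lia)) as [z Hz].
  assert (0 <= zgcd_list k q)
    by (destruct k as [|k]; [lia | rewrite zgcd_list_S; apply Z.gcd_nonneg]).
  destruct (Z.eq_dec (zgcd_list k q) 0) as [E|]; [rewrite E in Hz|]; lia.
Qed.

Lemma exists_argmax (k : nat) (f : nat -> Z) :
  (1 <= k)%nat -> exists j, (1 <= j <= k)%nat /\ forall i, (1 <= i <= k)%nat -> f i <= f j.
Proof.
  induction k as [|k IH]; intros Hk; [lia|].
  destruct (Nat.eq_dec k 0) as [->|Hk0].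
  - exists 1%nat. split; [lia|]. intros i Hi. replace i with 1%nat by lia. lia.
  - destruct (IH ltac:(lia)) as [j [Hj Hmax]].
    destruct (Z.le_gt_cases (f j) (f (S k))).
    + exists (S k). split; [lia|]. intros i Hi.
      destruct (Nat.eq_dec i (S k)) as [->|]; [lia|]. specialize (Hmax i ltac:(lia)). lia.
    + exists j. split; [lia|]. intros i Hi.
      destruct (Nat.eq_dec i (S k)) as [->|]; [lia|]. apply Hmax; lia.
Qed.

Lemma setA_snoc (n : nat) (q C D : nat -> Z) (y b : Z) :
  setA n q C D y -> C (S n) <= b <= D (S n) -> setA (S n) q C D (y + b * q (S n)).
Proof.
  intros [a [Ha ->]] Hb.
  exists (fun i => if Nat.eqb i (S n) then b else a i). split.
  - intros i Hi. destruct (Nat.eqb_spec i (S n)) as [->|]; [assumption | apply Ha; lia].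
  - rewrite zsum_S, Nat.eqb_refl. f_equal. apply zsum_ext.
    intros i Hi. destruct (Nat.eqb_spec i (S n)); [lia | reflexivity].
Qed.

Lemma setA_shift (k : nat) (q C D : nat -> Z) (x : Z) :
  setA k q (fun _ => 0) (fun i => D i - C i) x ->
  setA k q C D (zsum k (fun i => C i * q i) + x).
Proof.
  intros [b [Hb ->]]. exists (fun i => C i + b i). split.
  - intros i Hi. specialize (Hb i Hi). lia.
  - rewrite <- zsum_add. apply zsum_ext. intros i _. ring.
Qed.

Lemma setA_bounds (k : nat) (q C D : nat -> Z) (n : Z) :
  (forall i, (1 <= i <= k)%nat -> 0 <= q i) -> setA k q C D n ->
  zsum k (fun i => C i * q i) <= n <= zsum k (fun i => D i * q i).
Proof.
  intros Hq [a [Ha ->]].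
  split; apply zsum_le; intros i Hi; (apply Z.mul_le_mono_nonneg_r; [apply Hq, Hi | apply Ha, Hi]).
Qed.

Lemma setA_divide (k : nat) (q C D : nat -> Z) (r n : Z) :
  (forall i, (1 <= i <= k)%nat -> (r | q i)) -> setA k q C D n -> (r | n).
Proof.
  intros Hr [a [_ ->]]. apply zsum_divide. intros i Hi. apply Z.divide_mul_r, Hr, Hi.
Qed.

(* Bezout gives one admissible coefficient [b0]; the admissible ones form the class of [b0]
   modulo [g / gcd g qq]. *)
Lemma coefficient_in_range (g qq x hi : Z) :
  0 < g -> (Z.gcd g qq | x) ->
  exists b, hi - g / Z.gcd g qq < b <= hi /\ (g | x - b * qq).
Proof.
  intros Hg [t ->]. set (g' := Z.gcd g qq). set (d := g / g').
  assert (Hg' : 0 < g')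
    by (pose proof (Z.gcd_nonneg g qq); pose proof (proj1 (Z.gcd_eq_0 g qq)); lia).
  assert (Hdg : g = g' * d) by (apply Znumtheory.Zdivide_Zdiv_eq; [lia | apply Z.gcd_divide_l]).
  assert (Hd : 0 < d) by nia.
  destruct (Z.gcd_bezout g qq g' eq_refl) as [u [v Huv]].
  pose proof (Z.mod_pos_bound (hi - t * v) d Hd).
  pose proof (Z.div_mod (hi - t * v) d ltac:(lia)).
  exists (hi - (hi - t * v) mod d). split; [lia|].
  exists (t * u - (hi - t * v) / d * (qq / g')).
  replace (hi - (hi - t * v) mod d) with (t * v + d * ((hi - t * v) / d)) by lia.
  assert (Hdq : d * qq = g * (qq / g')) by apply Z.gcd_div_swap.
  assert (Hw : (hi - t * v) / d * (d * qq) = (hi - t * v) / d * (g * (qq / g')))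
    by (rewrite Hdq; reflexivity).
  rewrite <- Huv at 1. lia.
Qed.

Lemma extend_window (P : Z -> Prop) (g qq L al be : Z) :
  0 < g -> 0 < qq ->
  let d := g / Z.gcd g qq in
  d - 1 <= L -> al + d * qq <= be ->
  (forall y, (g | y) -> al <= y <= be -> P y) ->
  forall x, (Z.gcd g qq | x) -> al + (d - 1) * qq <= x <= be + (L - d + 1) * qq ->
  exists b, 0 <= b <= L /\ P (x - b * qq).
Proof.
  intros Hg Hqq d HL Hlen HP x Hx Hxb.
  (* [b] is the largest admissible coefficient below [min L ((x - al) / qq)]. *)
  set (h := (x - al) / qq).
  pose proof (Z.div_mod (x - al) qq ltac:(lia)) as Hdiv.
  pose proof (Z.mod_pos_bound (x - al) qq Hqq) as Hmod. fold h in Hdiv.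
  destruct (coefficient_in_range g qq x (Z.min L h) Hg Hx) as [b [Hb Hgb]]. fold d in Hb.
  exists b. split; [|apply HP; [exact Hgb|]].
  - destruct (Z.min_spec L h) as [[_ E]|[_ E]]; rewrite E in Hb; nia.
  - destruct (Z.min_spec L h) as [[_ E]|[_ E]]; rewrite E in Hb; nia.
Qed.

Lemma length_gain (g' d qq Q L : Z) :
  0 < g' -> 0 < d <= Q -> 0 < qq <= Q -> Q <= L -> g' * Q <= g' * d * Q + (L - 2 * d + 2) * qq.
Proof.
  intros Hg' Hd Hqq HQL. destruct (Z_le_gt_dec (2 * d - 2) L).
  - assert (0 <= (L - 2 * d + 2) * qq) by (apply Z.mul_nonneg_nonneg; lia).
    assert (0 <= g' * Q * (d - 1)) by (apply Z.mul_nonneg_nonneg; nia). lia.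
  (* a negative coefficient is worst at [qq = L = Q], where it needs
     [(g' - 1) (d - 1) + Q - d + 1 >= 0] *)
  - assert ((L - 2 * d + 2) * qq >= (Q - 2 * d + 2) * Q) by nia.
    assert ((g' - 1) * (d - 1) >= 0) by nia. nia.
Qed.

Section Windows.

Variables (k : nat) (q L : nat -> Z) (Q : Z).
Hypothesis bounds : forall i, (1 <= i <= k)%nat -> 0 < q i <= Q /\ Q <= L i.

(* Adjoining [q_{n+1}] to [q_1, ..., q_n] shrinks the window of representable multiples by
   [(d - 1) q_{n+1}] at each end, where [d = gcd(q_1..q_n) / gcd(q_1..q_{n+1})] is the period of
   the admissible values of the new coefficient (see [extend_window]). *)
Fixpoint slack (n : nat) : Z :=
  match n with
  | S (S _ as m) => slack m + (zgcd_list m q / zgcd_list n q - 1) * q n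
  | _ => 0
  end.

Let T (n : nat) : Z := zsum n (fun i => L i * q i).
Let Sq (n : nat) : Z := zsum n (fun i => q i * q (S i)).

Lemma gcd_step (n : nat) : (S (S n) <= k)%nat ->
  let g := zgcd_list (S n) q in
  let g' := zgcd_list (S (S n)) q in
  g' = Z.gcd g (q (S (S n))) /\ 0 < g /\ 0 < g' /\ g = g' * (g / g') /\ 0 < g / g' /\ g <= q (S n).
Proof.
  intros Hn g g'.
  assert (Hq1 : 0 < q 1%nat) by (apply bounds; lia).
  assert (Hg : 0 < g) by (apply zgcd_list_pos; lia).
  assert (Hg' : 0 < g') by (apply zgcd_list_pos; lia).
  assert (Eg' : g' = Z.gcd g (q (S (S n)))) by apply zgcd_list_S.
  assert (Hdg : g = g' * (g / g'))
    by (apply Znumtheory.Zdivide_Zdiv_eq; [lia | rewrite Eg'; apply Z.gcd_divide_l]).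
  assert (HgQ : g <= q (S n))
    by (apply Z.divide_pos_le; [apply bounds; lia | apply zgcd_list_divide; lia]).
  repeat split; try assumption. nia.
Qed.

Lemma slack_SS (n : nat) :
  slack (S (S n)) = slack (S n) + (zgcd_list (S n) q / zgcd_list (S (S n)) q - 1) * q (S (S n)).
Proof. reflexivity. Qed.

Lemma slack_nonneg (n : nat) : (S n <= k)%nat -> 0 <= slack (S n).
Proof.
  induction n as [|n IH]; intros Hn; [apply Z.le_refl|].
  destruct (gcd_step n Hn) as (_ & _ & _ & _ & Hd & _).
  rewrite slack_SS. specialize (bounds (S (S n)) ltac:(lia)). specialize (IH ltac:(lia)). nia.
Qed.

Lemma slack_mul_gcd_le (n : nat) : (S n <= k)%nat -> slack (S n) * zgcd_list (S n) q <= Sq n.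
Proof.
  induction n as [|n IH]; intros Hn; [apply Z.le_refl|].
  destruct (gcd_step n Hn) as (_ & _ & Hg' & Hdg & Hd & HgQ).
  pose proof (slack_nonneg n ltac:(lia)).
  unfold Sq. rewrite slack_SS, zsum_S. fold (Sq n).
  specialize (bounds (S (S n)) ltac:(lia)). specialize (IH ltac:(lia)). nia.
Qed.

Lemma window_length (n : nat) :
  (S n <= k)%nat -> zgcd_list (S n) q * Q <= T (S n) - 2 * slack (S n).
Proof.
  induction n as [|n IH]; intros Hn.
  - unfold T, zsum; simpl. rewrite zgcd_list_1 by (apply Z.lt_le_incl, bounds; lia).
    specialize (bounds 1%nat ltac:(lia)). nia.
  - destruct (gcd_step n Hn) as (_ & _ & Hg' & Hdg & Hd & HgQ).
    unfold T. rewrite slack_SS, zsum_S. fold (T (S n)).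
    pose proof (bounds (S n) ltac:(lia)). specialize (bounds (S (S n)) ltac:(lia)).
    specialize (IH ltac:(lia)).
    pose proof (length_gain (zgcd_list (S (S n)) q) (zgcd_list (S n) q / zgcd_list (S (S n)) q)
      (q (S (S n))) Q (L (S (S n))) Hg' ltac:(nia) ltac:(lia) ltac:(lia)).
    nia.
Qed.

Lemma window_representable (n : nat) : (S n <= k)%nat ->
  forall x, (zgcd_list (S n) q | x) -> slack (S n) <= x <= T (S n) - slack (S n) ->
  setA (S n) q (fun _ => 0) L x.
Proof.
  induction n as [|n IH]; intros Hn x Hx Hxb.
  - specialize (bounds 1%nat ltac:(lia)).
    rewrite zgcd_list_1 in Hx by lia. destruct Hx as [t ->].
    unfold T, zsum in Hxb; simpl in Hxb.
    exists (fun _ => t). split.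
    + intros i Hi. replace i with 1%nat by lia. nia.
    + unfold zsum; simpl. lia.
  - destruct (gcd_step n Hn) as (Eg' & Hg & Hg' & Hdg & Hd & HgQ).
    pose proof (window_length n ltac:(lia)) as Hlen.
    pose proof (bounds (S n) ltac:(lia)). pose proof (bounds (S (S n)) ltac:(lia)).
    set (g := zgcd_list (S n) q) in *. set (qq := q (S (S n))) in *.
    rewrite Eg' in Hx, Hg', Hdg, Hd.
    unfold T in Hxb. rewrite slack_SS, zsum_S, Eg' in Hxb. fold (T (S n)) g qq in Hxb.
    destruct (extend_window (setA (S n) q (fun _ => 0) L) g qq (L (S (S n)))
      (slack (S n)) (T (S n) - slack (S n))) with (x := x) as [b [Hb Hrep]];
      cbv zeta.
    + exact Hg.
    + lia.
    + nia.
    + nia.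
    + intros y Hy Hyb. apply IH; [lia | assumption | assumption].
    + exact Hx.
    + lia.
    + replace x with (x - b * qq + b * qq) by ring. apply setA_snoc; assumption.
Qed.

Lemma setA_of_gcd_multiple : (1 <= k)%nat ->
  forall x, (zgcd_list k q | x) ->
  Sq (k - 1) <= x * zgcd_list k q <= T k * zgcd_list k q - Sq (k - 1) ->
  setA k q (fun _ => 0) L x.
Proof.
  intros Hk x Hx Hxb.
  assert (Hg : 0 < zgcd_list k q) by (apply zgcd_list_pos; [lia | apply bounds; lia]).
  set (n := (k - 1)%nat) in *.
  pose proof (slack_mul_gcd_le n ltac:(lia)).
  pose proof (window_representable n ltac:(lia)) as Hrep.
  replace (S n) with k in * by lia.
  apply Hrep; [exact Hx | split].
  - apply (Z.mul_le_mono_pos_r _ _ _ Hg). lia.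
  - apply (Z.mul_le_mono_pos_r _ _ _ Hg). rewrite Z.mul_sub_distr_r. lia.
Qed.

End Windows.

Lemma Qle_Zdiv_l (a r m : Z) : 0 < r -> a <= m * r -> (inject_Z a / inject_Z r <= inject_Z m)%Q.
Proof.
  intros Hr H. destruct r as [|p|p]; try lia.
  unfold Qle, Qdiv, Qmult, Qinv, inject_Z; simpl. nia.
Qed.

Lemma Qle_Zdiv_r (a r m : Z) : 0 < r -> m * r <= a -> (inject_Z m <= inject_Z a / inject_Z r)%Q.
Proof.
  intros Hr H. destruct r as [|p|p]; try lia.
  unfold Qle, Qdiv, Qmult, Qinv, inject_Z; simpl. nia.
Qed.

Lemma Zle_of_Qle_shifted_l (a s r m : Z) : 0 < r ->
  (inject_Z a / inject_Z r + inject_Z s / (inject_Z r * inject_Z r) <= inject_Z m)%Q ->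
  a * r + s <= m * r * r.
Proof.
  intros Hr H. destruct r as [|p|p]; try lia.
  unfold Qle, Qdiv, Qmult, Qplus, Qinv, inject_Z in H; simpl in H.
  rewrite ?Pos2Z.inj_mul in H. nia.
Qed.

Lemma Zle_of_Qle_shifted_r (a s r m : Z) : 0 < r ->
  (inject_Z m <= inject_Z a / inject_Z r - inject_Z s / (inject_Z r * inject_Z r))%Q ->
  m * r * r <= a * r - s.
Proof.
  intros Hr H. destruct r as [|p|p]; try lia.
  unfold Qle, Qdiv, Qmult, Qminus, Qplus, Qopp, Qinv, inject_Z in H; simpl in H.
  rewrite ?Pos2Z.inj_mul in H. nia.
Qed.

Theorem lemma4p1 (k : nat) (q C D : nat -> Z) :
  (2 <= k)%nat ->
  (forall i, (1 <= i <= k)%nat -> (0 < q i)%Z) ->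
  (forall i, (1 <= i <= k)%nat ->
     forall j, (1 <= j <= k)%nat -> (q j <= D i - C i)%Z) ->
  let r := zgcd_list k q in
  let Cs := zsum k (fun i => (C i * q i)%Z) in
  let Ds := zsum k (fun i => (D i * q i)%Z) in
  let Sq := zsum (k - 1) (fun i => (q i * q (Datatypes.S i))%Z) in
  (forall n, setA k q C D n ->
     exists m : Z, n = (m * r)%Z /\
       (inject_Z Cs / inject_Z r <= inject_Z m)%Q /\
       (inject_Z m <= inject_Z Ds / inject_Z r)%Q) /\
  (forall m : Z,
     (inject_Z Cs / inject_Z r + inject_Z Sq / (inject_Z r * inject_Z r)
        <= inject_Z m)%Q ->
     (inject_Z m <= inject_Z Ds / inject_Z r
        - inject_Z Sq / (inject_Z r * inject_Z r))%Q ->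
     setA k q C D (m * r)%Z).
Proof.
  intros Hk Hq Hqd r Cs Ds Sq.
  assert (Hr : 0 < r) by (apply zgcd_list_pos; [lia | apply Hq; lia]).
  assert (Hrq : forall i, (1 <= i <= k)%nat -> (r | q i)) by (intros; apply zgcd_list_divide; auto).
  assert (HrCs : (r | Cs)) by (apply zsum_divide; intros; apply Z.divide_mul_r; auto).
  split.
  - intros n Hn. destruct (setA_divide k q C D r n Hrq Hn) as [m ->].
    pose proof (setA_bounds k q C D (m * r) ltac:(intros i Hi; specialize (Hq i Hi); lia) Hn).
    exists m. split; [reflexivity |]. split; [apply Qle_Zdiv_l | apply Qle_Zdiv_r]; lia.
  - intros m Hlo Hhi.
    apply Zle_of_Qle_shifted_l in Hlo; [|exact Hr]. apply Zle_of_Qle_shifted_r in Hhi; [|exact Hr].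
    destruct (exists_argmax k q ltac:(lia)) as [j [Hj Hmax]].
    replace (m * r) with (Cs + (m * r - Cs)) by ring. apply setA_shift.
    apply (setA_of_gcd_multiple k q (fun i => D i - C i) (q j)).
    + intros i Hi. pose proof (Hq i Hi). pose proof (Hmax i Hi). pose proof (Hqd i Hi j Hj). lia.
    + lia.
    + apply Z.divide_sub_r; [apply Z.divide_factor_r | exact HrCs].
    + assert (HT : zsum k (fun i => (D i - C i) * q i) = Ds - Cs)
        by (unfold Ds, Cs; rewrite <- zsum_sub; apply zsum_ext; intros; ring).
      rewrite HT. fold r Sq. nia.
Qed.
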